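(* Let $\lambda>1$, $0<\alpha<1$, $0<r_0<1$, $C_1=\frac{2\alpha\log\lambda}{r_0^\alpha}$, and let $s(t)=(s_1(t),s_2(t))$, $t\in[0,T]$, and $T_1=T/2$ be as follows: $s$ solves $\dot s_1=s_1\psi(s_1^2+s_2^2)\log\lambda$, $\dot s_2=-s_2\psi(s_1^2+s_2^2)\log\lambda$, $[0,T]$ is the maximal time interval on which $s(t)\in D_{r_0/2}$, $|s_1(t)|\le|s_2(t)|$ on $[0,T_1]$ and $|s_1(t)|\ge|s_2(t)|$ on $[T_1,T]$. Let $\tilde s(t)$ be another solution of the same system and $\Delta s_i(t)=\tilde s_i(t)-s_i(t)$, $\Delta s=(\Delta s_1,\Delta s_2)$. Given $0<\mu<1$, assume that $s_1(t)\ne0\ne s_2(t)$ and (1) $\Delta s_2(t)>0$ and $|\Delta s_1(t)|\le\mu\Delta s_2(t)$ for $t\in[0,T]$; (2) $\big|\frac{\Delta s_2(0)}{s_2(0)}\big|<\frac{1-\mu}{72}$. Then, with $\beta=\frac{1-\mu}{2^{\alpha+2}}$, $$\Delta s_2(t)\le\frac{\Delta s_2(0)}{s_2(0)}s_2(t)\big(1+2^\alpha C_1|s_2(0)|^{2\alpha}t\big)^{-\beta},\quad 0\le t\le T_1;$$ $$\Delta s_2(t)\le\frac{\Delta s_2(T_1)}{s_1(T_1)}s_1(t)\big(1-2^\alpha C_1|s_1(T_1)|^{2\alpha}(t-T_1)\big)^{-\beta},\quad T_1\le t\le T.$$ In addition, $\|\Delta s(T)\|\le\sqrt{1+\mu^2}\,\frac{s_1(T)}{s_2(0)}\|\Delta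 s(0)\|$.
   Context: Here $D_r=\{(s_1,s_2):s_1^2+s_2^2\le r\}$ and $\psi:[0,1]\to[0,1]$ is a function with $\psi(u)=(u/r_0)^\alpha$ for $0\le u\le r_0/2$ (and $C^\infty$ away from $0$, $\psi=1$ on $[r_0,1]$, $\psi'>0$ decreasing on $(0,r_0)$). The norm is the Euclidean norm in the coordinates $(s_1,s_2)$. *)

From Stdlib Require Import Reals.
From Coquelicot Require Import Coquelicot.
Open Scope R_scope.

(* Standing assumptions on psi : [0,1] -> [0,1] (psi is given as a total
   function R -> R; only its values on [0,1] matter). *)
Definition admissible_psi (r0 alpha : R) (psi : R -> R) : Prop :=
  (forall u, 0 <= u <= 1 -> 0 <= psi u <= 1) /\
  psi 0 = 0 /\
  (forall u, 0 < u <= r0 / 2 -> psi u = Rpower (u / r0) alpha) /\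
  (forall n u, 0 < u < 1 -> ex_derive_n psi n u) /\
  (forall u, r0 <= u <= 1 -> psi u = 1) /\
  (forall u, 0 < u < r0 -> 0 < Derive psi u) /\
  (forall u v, 0 < u -> u < v -> v < r0 -> Derive psi v < Derive psi u).

Definition inD (r a b : R) : Prop := a ^ 2 + b ^ 2 <= r.

Definition solves_at (psi : R -> R) (lam : R) (s1 s2 : R -> R) (t : R) : Prop :=
  is_derive s1 t (s1 t * psi (s1 t ^ 2 + s2 t ^ 2) * ln lam) /\
  is_derive s2 t (- (s2 t * psi (s1 t ^ 2 + s2 t ^ 2) * ln lam)).

Definition eucl_norm (a b : R) : R := sqrt (a ^ 2 + b ^ 2).

From Stdlib Require Import Reals Lra Psatz Classical.
From Stdlib Require Ranalysis5.
From Coquelicot Require Import Coquelicot.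
Open Scope R_scope.

(* Write D = st - s.  While |s1| <= |s2|, the ratio p = D2 / |s2| satisfies
   p' = - log lam * st2 * (psi |st|^2 - psi |s|^2) / |s2|.  As long as p < (1 - mu) / 72,
   the cone condition |D1| <= mu D2 and the concavity of psi (which is u |-> (u / r0)^alpha
   on D_{r0/2}) give st2 * (psi |st|^2 - psi |s|^2) >= (1 - mu) alpha D2 (s2^2 / r0)^alpha / 2,
   i.e. p' <= - beta K |s2|^(2 alpha) p with K = 2^alpha C1.  Since (|s2|^(-2 alpha))' <= K,
   K |s2|^(2 alpha) >= c0 / (1 + c0 t) with c0 = K |s2(0)|^(2 alpha), so p (1 + c0 t)^beta
   is nonincreasing.  While |s2| <= |s1| the same estimates make q = D2 / |s1| nonincreasing,
   which already gives the second bound since its last factor is >= 1.  The smallness of p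
   and q is propagated from hypothesis (2) by continuous induction, and the norm bound follows
   from q(T) <= q(T/2) = p(T/2) <= p(0) and |D1| <= mu D2. *)

Lemma Rdiv_le_mono_r x y r : 0 < r -> x <= y -> x / r <= y / r.
Proof. intros Hr Hxy. apply Rmult_le_compat_r; [left; apply Rinv_0_lt_compat|]; lra. Qed.

Lemma Rdiv_lt_mono_r x y r : 0 < r -> x < y -> x / r < y / r.
Proof. intros Hr Hxy. apply Rmult_lt_compat_r; [apply Rinv_0_lt_compat|]; lra. Qed.

Lemma Rabs_mult_bounds a b x y : Rabs a <= x -> Rabs b <= y -> - (x * y) <= a * b <= x * y.
Proof.
  intros Ha Hb. apply Rabs_le_between. rewrite Rabs_mult.
  apply Rmult_le_compat; auto using Rabs_pos.
Qed.

Lemma sq_le_of_Rabs_le a x : Rabs a <= x -> a ^ 2 <= x ^ 2.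
Proof.
  intros H. rewrite <- (pow2_abs a). apply pow_incr. split; [apply Rabs_pos|exact H].
Qed.

Lemma Rdiv_same_sign a b : 0 < a * b -> b / a = Rabs b / Rabs a.
Proof.
  intros Hab. destruct (Rtotal_order a 0) as [Ha|[Ha|Ha]].
  - rewrite (Rabs_left a), (Rabs_left b) by nra. field. lra.
  - subst a. lra.
  - rewrite (Rabs_right a), (Rabs_right b) by nra. reflexivity.
Qed.

Lemma sign_mul_self x : sign x * x = Rabs x.
Proof.
  destruct (Rtotal_order x 0) as [Hx|[->|Hx]].
  - rewrite sign_eq_m1, Rabs_left by exact Hx. ring.
  - rewrite sign_0, Rabs_R0. ring.
  - rewrite sign_eq_1, Rabs_right by lra. ring.
Qed.

Lemma eucl_norm_le_cone a b mu : Rabs a <= mu * b -> 0 <= b ->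
  eucl_norm a b <= sqrt (1 + mu ^ 2) * b.
Proof.
  intros Hab Hb. unfold eucl_norm.
  assert (Ha2 := sq_le_of_Rabs_le a (mu * b) Hab).
  rewrite <- (sqrt_pow2 b Hb) at 2. rewrite <- sqrt_mult by (apply pow2_ge_0 || nra).
  apply sqrt_le_1; [nra|nra|nra].
Qed.

Lemma le_eucl_norm_r a b : b <= eucl_norm a b.
Proof.
  unfold eucl_norm. apply Rle_trans with (Rabs b); [apply Rle_abs|].
  rewrite <- (sqrt_pow2 (Rabs b)) by apply Rabs_pos. rewrite pow2_abs.
  apply sqrt_le_1; [apply pow2_ge_0|nra|assert (0 <= a ^ 2) by apply pow2_ge_0; lra].
Qed.

Lemma real_induction (P : R -> Prop) (a b : R) :
  a <= b -> P a ->
  (forall t, a <= t < b -> (forall s, a <= s <= t -> P s) ->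
     exists d, 0 < d /\ forall s, t <= s <= t + d -> s <= b -> P s) ->
  (forall t, a < t <= b -> (forall s, a <= s < t -> P s) -> P t) ->
  forall t, a <= t <= b -> P t.
Proof.
  intros Hab Pa Hright Hleft.
  set (E := fun x => a <= x <= b /\ forall s, a <= s <= x -> P s).
  assert (Ea : E a).
  { split; [lra|]. intros s Hs. replace s with a by lra. exact Pa. }
  destruct (completeness E) as [tau [Hub Hlub]].
  { exists b. intros x [Hx _]. lra. }
  { exists a. exact Ea. }
  assert (Hat : a <= tau) by (apply Hub, Ea).
  assert (Htb : tau <= b) by (apply Hlub; intros x [Hx _]; lra).
  assert (Hbelow : forall s, a <= s < tau -> P s).
  { intros s Hs. apply NNPP. intros HPs.
    assert (tau <= s); [|lra].
    apply Hlub. intros x [_ Hx]. apply Rnot_lt_le. intros Hsx. apply HPs, Hx. lra. }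
  assert (Hall : forall s, a <= s <= tau -> P s).
  { intros s Hs. destruct (Req_dec s tau) as [->|]; [|apply Hbelow; lra].
    destruct (Req_dec tau a) as [->|]; [exact Pa|]. apply Hleft; [lra|exact Hbelow]. }
  destruct (Req_dec tau b) as [<-|Hne]; [exact Hall|].
  destruct (Hright tau ltac:(lra) Hall) as [d [Hd Hstep]].
  set (x := Rmin b (tau + d / 2)).
  assert (Hx : a <= x <= b /\ tau < x).
  { unfold x, Rmin. destruct Rle_dec; lra. }
  assert (E x).
  { split; [lra|]. intros s Hs. destruct (Rle_dec s tau); [apply Hall; lra|].
    apply Hstep; [|lra]. assert (x <= tau + d / 2) by apply Rmin_r. lra. }
  assert (x <= tau) by (apply Hub; assumption). lra.
Qed.

Lemma is_derive_continuity_pt (f : R -> R) t l : is_derive f t l -> continuity_pt f t.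
Proof.
  intros H. apply continuity_pt_filterlim, (ex_derive_continuous f). exists l; exact H.
Qed.

Lemma is_derive_near (f : R -> R) t l : is_derive f t l ->
  forall eps, 0 < eps -> exists d, 0 < d /\ forall s, Rabs (s - t) < d -> Rabs (f s - f t) < eps.
Proof.
  intros H eps Heps.
  destruct (is_derive_continuity_pt f t l H eps Heps) as [d [Hd Hclose]].
  exists d. split; [exact Hd|]. intros s Hs.
  destruct (Req_dec s t) as [->|Hne]; [rewrite Rminus_eq_0, Rabs_R0; lra|].
  apply (Hclose s). repeat split; auto.
Qed.

Lemma mvt_is_derive (f df : R -> R) a b : a < b ->
  (forall t, a <= t <= b -> is_derive f t (df t)) ->
  exists c, a < c < b /\ f b - f a = df c * (b - a).
Proof.
  intros Hab H. destruct (MVT_cor2 f df a b Hab) as [c [Hc1 Hc2]].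
  - intros c Hc. apply is_derive_Reals, H; exact Hc.
  - exists c; split; assumption.
Qed.

Lemma nonincreasing_while_below (f df : R -> R) a b M : a <= b ->
  (forall t, a <= t <= b -> is_derive f t (df t)) -> f a < M ->
  (forall t, a <= t <= b -> f t < M -> df t <= 0) ->
  forall t, a <= t <= b -> f t <= f a.
Proof.
  intros Hab Hd HM Hdf.
  apply (real_induction (fun t => f t <= f a) a b Hab (Rle_refl _)).
  - intros t Ht Hprev.
    assert (Hft : f t <= f a) by (apply Hprev; lra).
    destruct (is_derive_near f t _ (Hd t ltac:(lra)) (M - f t) ltac:(lra)) as [d [Hd0 Hnear]].
    exists (d / 2). split; [lra|]. intros s Hs Hsb.
    destruct (Req_dec s t) as [->|Hne]; [exact Hft|].
    destruct (mvt_is_derive f df t s ltac:(lra)) as [c [Hc Hfc]].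
    { intros x Hx. apply Hd. lra. }
    assert (Hdc : df c <= 0).
    { apply Hdf; [lra|]. assert (Hc' : Rabs (c - t) < d) by (rewrite Rabs_right; lra).
      specialize (Hnear c Hc'). apply Rabs_def2 in Hnear. lra. }
    nra.
  - intros t Ht Hprev. apply Rnot_lt_le. intros Hlt.
    destruct (is_derive_near f t _ (Hd t ltac:(lra)) (f t - f a) ltac:(lra)) as [d [Hd0 Hnear]].
    set (s := Rmax a (t - d / 2)).
    assert (Hs : a <= s < t /\ t - d / 2 <= s) by (unfold s, Rmax; destruct Rle_dec; lra).
    assert (Hfs : f s <= f a) by (apply Hprev; lra).
    assert (Hs' : Rabs (s - t) < d) by (rewrite Rabs_left; lra).
    specialize (Hnear s Hs'). apply Rabs_def2 in Hnear. lra.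
Qed.

Lemma continuous_nonvanishing_same_sign (f : R -> R) a b :
  (forall t, a <= t <= b -> continuity_pt f t) ->
  (forall t, a <= t <= b -> f t <> 0) ->
  forall t, a <= t <= b -> 0 < f a * f t.
Proof.
  intros Hc Hnz t Ht.
  assert (Ha : f a <> 0) by (apply Hnz; lra).
  assert (Hft : f t <> 0) by (apply Hnz; lra).
  destruct (Req_dec a t) as [<-|Hat]; [nra|].
  apply Rnot_le_lt. intros Hopp.
  destruct (Rlt_dec (f a) 0) as [Hneg|Hpos].
  - destruct (Ranalysis5.IVT_interv f a t) as [z [Hz Hfz]]; try lra.
    + intros x Hx. apply Hc. lra.
    + nra.
    + apply (Hnz z); [lra|exact Hfz].
  - destruct (Ranalysis5.IVT_interv (fun x => - f x) a t) as [z [Hz Hfz]]; try lra.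
    + intros x Hx. apply continuity_pt_opp, Hc. lra.
    + nra.
    + apply (Hnz z); lra.
Qed.

Lemma Rpower_pos x e : 0 < Rpower x e.
Proof. apply exp_pos. Qed.

Lemma Rpower_le_base_nonpos a b e : 0 < a <= b -> e <= 0 -> Rpower b e <= Rpower a e.
Proof.
  intros Hab He.
  replace e with (- - e) by ring. rewrite (Rpower_Ropp b), (Rpower_Ropp a).
  apply Rinv_le_contravar; [apply Rpower_pos|]. apply Rle_Rpower_l; lra.
Qed.

Lemma Rpower_le_exp_base_le1 b e f : 0 < b <= 1 -> e <= f -> Rpower b f <= Rpower b e.
Proof.
  intros Hb Hef. unfold Rpower.
  assert (ln b <= 0) by (rewrite <- ln_1; apply ln_le; lra).
  destruct (Req_dec (f * ln b) (e * ln b)) as [->|]; [lra|].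
  left. apply exp_increasing. nra.
Qed.

Lemma Rpower_pred_mul x e : 0 < x -> Rpower x (e - 1) * x = Rpower x e.
Proof.
  intros Hx. rewrite <- (Rpower_1 x) at 2 by exact Hx. rewrite <- Rpower_plus. f_equal; ring.
Qed.

Lemma Rpower_le_mul_Rpower x y c e : 0 < x <= y -> y <= c * x -> -1 <= e <= 0 ->
  Rpower x e <= c * Rpower y e.
Proof.
  intros Hxy Hyc He.
  replace x with (x / y * y) at 1 by (field; lra).
  rewrite <- Rpower_mult_distr by (try apply Rdiv_lt_0_compat; lra).
  apply Rmult_le_compat_r; [left; apply Rpower_pos|].
  assert (Hq : 0 < x / y <= 1).
  { split; [apply Rdiv_lt_0_compat; lra|].
    apply Rmult_le_reg_r with y; [lra|]. unfold Rdiv. rewrite Rmult_assoc, Rinv_l; lra. }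
  apply Rle_trans with (Rpower (x / y) (- 1)); [apply Rpower_le_exp_base_le1; lra|].
  replace (- 1) with (- (1)) by ring.
  rewrite Rpower_Ropp, Rpower_1 by lra.
  replace (/ (x / y)) with (y / x) by (field; lra).
  apply Rmult_le_reg_r with x; [lra|]. unfold Rdiv. rewrite Rmult_assoc, Rinv_l; lra.
Qed.

Lemma Rpower_increment_bounds a b al : 0 < a < b -> 0 < al < 1 ->
  al * Rpower b (al - 1) * (b - a) <= Rpower b al - Rpower a al <=
  al * Rpower a (al - 1) * (b - a).
Proof.
  intros Hab Hal.
  destruct (MVT_cor2 (fun x => Rpower x al) (fun x => al * Rpower x (al - 1)) a b)
    as [c [Hc1 Hc2]]; [lra| |].
  { intros c Hc. apply derivable_pt_lim_power. lra. }
  rewrite Hc1.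
  assert (Rpower b (al - 1) <= Rpower c (al - 1)) by (apply Rpower_le_base_nonpos; lra).
  assert (Rpower c (al - 1) <= Rpower a (al - 1)) by (apply Rpower_le_base_nonpos; lra).
  split; apply Rmult_le_compat_r; try lra; apply Rmult_le_compat_l; lra.
Qed.

Lemma Rpower_Rabs_double a r al : a <> 0 -> 0 < r ->
  Rpower (Rabs a) (2 * al) = Rpower (a ^ 2 / r) al * Rpower r al.
Proof.
  intros Ha Hr.
  assert (Hsq : 0 < a ^ 2) by (apply pow2_gt_0; exact Ha).
  rewrite Rpower_mult_distr by (try apply Rdiv_lt_0_compat; lra).
  replace (a ^ 2 / r * r) with (Rpower (Rabs a) 2).
  - rewrite Rpower_mult. f_equal; ring.
  - replace 2 with (INR 2) by (simpl; ring).
    rewrite Rpower_pow by (apply Rabs_pos_lt; exact Ha).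
    rewrite pow2_abs. field. lra.
Qed.

Lemma ln2_gt_3_5 : 3 / 5 < ln 2.
Proof.
  assert (He : exp 1 <= 3) by apply exp_le_3.
  assert (Hp : 0 < exp (3 / 5)) by apply exp_pos.
  assert (H5 : exp (3 / 5) ^ 5 = exp 1 * exp 1 * exp 1).
  { rewrite <- !exp_plus. simpl. rewrite Rmult_1_r, <- !exp_plus. f_equal; field. }
  assert (Hlt : exp (3 / 5) < 2).
  { apply Rnot_le_lt. intros H2.
    assert (2 ^ 5 <= exp (3 / 5) ^ 5) by (apply pow_incr; lra).
    assert (0 < exp 1) by apply exp_pos.
    assert (exp 1 * exp 1 <= 9) by nra. nra. }
  rewrite <- (ln_exp (3 / 5)). apply ln_increasing; assumption.
Qed.

Lemma one_sub_Rpower_ge U al : 0 < U <= 1 / 2 -> 0 < al ->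
  3 / 5 * al * Rpower U al <= 1 - Rpower U al.
Proof.
  intros HU Hal.
  assert (Hl : ln 2 <= - ln U).
  { rewrite <- ln_Rinv by lra. apply ln_le; [lra|].
    apply Rmult_le_reg_r with U; [lra|]. rewrite Rinv_l; lra. }
  assert (H2 := ln2_gt_3_5).
  assert (Hinv : Rpower U al * exp (- (al * ln U)) = 1).
  { unfold Rpower. rewrite <- exp_plus, Rplus_opp_r. apply exp_0. }
  assert (Hexp := exp_ineq1_le (- (al * ln U))).
  assert (0 < Rpower U al) by apply Rpower_pos.
  assert (Rpower U al * (1 + - (al * ln U)) <= 1)
    by (rewrite <- Hinv; apply Rmult_le_compat_l; lra).
  assert (0 <= Rpower U al * al * (- ln U - 3 / 5))
    by (apply Rmult_le_pos; [apply Rmult_le_pos|]; lra).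
  nra.
Qed.

Lemma Rpower_base_1 e : Rpower 1 e = 1.
Proof. unfold Rpower. rewrite ln_1, Rmult_0_r. apply exp_0. Qed.

Lemma Rpower_le_mul_pred S U c al : 0 < S <= U -> U <= c * S -> 0 < al < 1 ->
  Rpower S al <= c * S * Rpower U (al - 1).
Proof.
  intros HSU HUc Hal. rewrite <- (Rpower_pred_mul S al) by lra.
  assert (Rpower S (al - 1) <= c * Rpower U (al - 1)) by (apply Rpower_le_mul_Rpower; lra).
  nra.
Qed.

Lemma Rpower_increment_near S U V al : 0 < S <= U -> U < V <= 3 * S -> 0 < al < 1 ->
  al * Rpower S al * (V - U) <= 3 * S * (Rpower V al - Rpower U al).
Proof.
  intros HSU HUV Hal.
  assert (HS := Rpower_le_mul_pred S V 3 al ltac:(lra) ltac:(lra) Hal).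
  destruct (Rpower_increment_bounds U V al ltac:(lra) Hal) as [Hinc _].
  assert (al * (V - U) * Rpower S al <= al * (V - U) * (3 * S * Rpower V (al - 1)))
    by (apply Rmult_le_compat_l; [apply Rmult_le_pos|]; lra).
  assert (3 * S * (al * Rpower V (al - 1) * (V - U)) <= 3 * S * (Rpower V al - Rpower U al))
    by (apply Rmult_le_compat_l; lra).
  nra.
Qed.

Lemma Rpower_increment_far S U al : 5 / 11 <= U <= 1 / 2 -> 0 < S <= U -> U <= 2 * S ->
  0 < al < 1 -> al * Rpower S al * (1 - U) <= 4 * S * (1 - Rpower U al).
Proof.
  intros HU HSU HUS Hal.
  assert (HS := Rpower_le_mul_pred S U 2 al ltac:(lra) HUS Hal).
  assert (Hgap := one_sub_Rpower_ge U al ltac:(lra) ltac:(lra)).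
  assert (HUal : Rpower U (al - 1) * U = Rpower U al) by (apply Rpower_pred_mul; lra).
  assert (0 < Rpower U (al - 1)) by apply Rpower_pos.
  assert (Hkey : al * Rpower U (al - 1) * (1 - U) <= 2 * (1 - Rpower U al)).
  { apply Rmult_le_reg_r with U; [lra|].
    replace (al * Rpower U (al - 1) * (1 - U) * U) with (al * Rpower U al * (1 - U))
      by (rewrite <- HUal; ring).
    assert (0 < al * Rpower U al) by (apply Rmult_lt_0_compat; [lra|apply Rpower_pos]).
    assert (al * Rpower U al * (1 - U) <= al * Rpower U al * (6 / 5 * U))
      by (apply Rmult_le_compat_l; lra).
    nra. }
  assert (al * (1 - U) * Rpower S al <= al * (1 - U) * (2 * S * Rpower U (al - 1)))
    by (apply Rmult_le_compat_l; [apply Rmult_le_pos|]; lra).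
  assert (2 * S * (al * Rpower U (al - 1) * (1 - U)) <= 2 * S * (2 * (1 - Rpower U al)))
    by (apply Rmult_le_compat_l; lra).
  nra.
Qed.

Lemma Rpower_decrement_lower S U V al : 0 < V < U -> 0 < S <= U -> U <= 2 * S ->
  0 < al < 1 -> al * Rpower S al * (U - V) <= 2 * S * (Rpower U al - Rpower V al).
Proof.
  intros HVU HSU HUS Hal.
  assert (HS := Rpower_le_mul_pred S U 2 al HSU HUS Hal).
  destruct (Rpower_increment_bounds V U al HVU Hal) as [Hdec _].
  assert (al * (U - V) * Rpower S al <= al * (U - V) * (2 * S * Rpower U (al - 1)))
    by (apply Rmult_le_compat_l; [apply Rmult_le_pos|]; lra).
  assert (2 * S * (al * Rpower U (al - 1) * (U - V)) <= 2 * S * (Rpower U al - Rpower V al))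
    by (apply Rmult_le_compat_l; lra).
  nra.
Qed.

Lemma Rpower_decrement_upper U V c al : 0 < c * U <= V -> V < U -> 0 < al < 1 ->
  c * (Rpower U al - Rpower V al) * U <= al * Rpower U al * (U - V).
Proof.
  intros HcV HVU Hal.
  assert (Hc : 0 < c) by nra.
  assert (HV : Rpower V (al - 1) * c <= Rpower U (al - 1)).
  { assert (Rpower V (al - 1) <= / c * Rpower U (al - 1)).
    { apply Rpower_le_mul_Rpower; [lra| |lra].
      apply Rmult_le_reg_l with c; [lra|]. rewrite <- Rmult_assoc, Rinv_r; lra. }
    apply Rmult_le_reg_r with (/ c); [apply Rinv_0_lt_compat; lra|].
    rewrite Rmult_assoc, Rinv_r; lra. }
  destruct (Rpower_increment_bounds V U al ltac:(lra) Hal) as [_ Hdec].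
  assert (c * U * (Rpower U al - Rpower V al) <= c * U * (al * Rpower V (al - 1) * (U - V)))
    by (apply Rmult_le_compat_l; nra).
  assert (al * (U - V) * U * (Rpower V (al - 1) * c) <= al * (U - V) * U * Rpower U (al - 1))
    by (apply Rmult_le_compat_l; [apply Rmult_le_pos; [apply Rmult_le_pos|]|]; lra).
  replace (al * Rpower U al * (U - V)) with (al * (U - V) * U * Rpower U (al - 1))
    by (rewrite <- (Rpower_pred_mul U al) by lra; ring).
  nra.
Qed.

Lemma decay_while_small (p dp : R -> R) b M beta k :
  0 <= beta -> 0 <= k ->
  (forall t, 0 <= t <= b -> is_derive p t (dp t)) ->
  (forall t, 0 <= t <= b -> 0 < p t) -> p 0 < M ->
  (forall t, 0 <= t <= b -> p t < M -> dp t * (1 + k * t) + beta * k * p t <= 0) ->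
  forall t, 0 <= t <= b -> p t <= p 0 * Rpower (1 + k * t) (- beta).
Proof.
  intros Hbeta Hk Hd Hpos HM Hrate t Ht.
  set (E := fun t => Rpower (1 + k * t) beta).
  assert (HE1 : forall t, 0 <= t -> 1 <= E t).
  { intros s Hs. unfold E. rewrite <- (Rpower_base_1 beta) at 1.
    apply Rle_Rpower_l; [lra|]. split; [lra|]. nra. }
  assert (HdE : forall t, 0 <= t -> is_derive E t (k * (beta * Rpower (1 + k * t) (beta - 1)))).
  { intros s Hs. apply (is_derive_comp (fun x => Rpower x beta) (fun t => 1 + k * t)).
    - apply is_derive_Reals, derivable_pt_lim_power. nra.
    - auto_derive; [exact I|ring]. }
  set (Phi := fun t => p t * E t).
  set (dPhi := fun t => Rpower (1 + k * t) (beta - 1) * (dp t * (1 + k * t) + beta * k * p t)).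
  assert (HdPhi : forall t, 0 <= t <= b -> is_derive Phi t (dPhi t)).
  { intros s Hs. unfold dPhi.
    replace (Rpower (1 + k * s) (beta - 1) * (dp s * (1 + k * s) + beta * k * p s))
      with (dp s * E s + p s * (k * (beta * Rpower (1 + k * s) (beta - 1))))
      by (unfold E; rewrite <- (Rpower_pred_mul (1 + k * s) beta) by nra; ring).
    apply (is_derive_mult p E); [apply Hd, Hs|apply HdE; lra|intros; apply Rmult_comm]. }
  assert (HPhi : forall t, 0 <= t <= b -> Phi t <= Phi 0).
  { apply (nonincreasing_while_below Phi dPhi 0 b M); [lra|exact HdPhi| |].
    - unfold Phi, E. rewrite Rmult_0_r, Rplus_0_r, Rpower_base_1, Rmult_1_r. exact HM.
    - intros s Hs HPhiM. unfold dPhi.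
      assert (p s <= Phi s) by (unfold Phi; assert (1 <= E s) by (apply HE1; lra);
                                assert (0 < p s) by (apply Hpos; lra); nra).
      assert (0 < Rpower (1 + k * s) (beta - 1)) by apply Rpower_pos.
      assert (dp s * (1 + k * s) + beta * k * p s <= 0) by (apply Hrate; lra).
      nra. }
  assert (HE0 : Phi 0 = p 0)
    by (unfold Phi, E; rewrite Rmult_0_r, Rplus_0_r, Rpower_base_1; ring).
  assert (HEt := HE1 t ltac:(lra)).
  specialize (HPhi t Ht). rewrite HE0 in HPhi. unfold Phi in HPhi.
  rewrite Rpower_Ropp. fold (E t).
  apply Rmult_le_reg_r with (E t); [lra|].
  rewrite Rmult_assoc, Rinv_l by lra. lra.
Qed.

Section Psi.
Variables (r0 al : R) (psi : R -> R).
Hypothesis Hr0 : r0 < 1.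
Hypothesis Hal : 0 < al < 1.
Hypothesis Hpsi : admissible_psi r0 al psi.

Lemma psi_bounded u : 0 <= u <= 1 -> 0 <= psi u <= 1.
Proof. apply Hpsi. Qed.

Lemma psi_power u : 0 < u <= r0 / 2 -> psi u = Rpower (u / r0) al.
Proof. apply Hpsi. Qed.

Lemma psi_mvt x y : 0 < x < y -> y < 1 ->
  exists c, x < c < y /\ psi y - psi x = Derive psi c * (y - x).
Proof.
  intros Hxy Hy. apply mvt_is_derive; [lra|]. intros t Ht.
  destruct Hpsi as (_ & _ & _ & Hsmooth & _).
  apply Derive_correct, (Hsmooth 1%nat). lra.
Qed.

Lemma psi_increasing x y : 0 < x <= y -> y < r0 -> psi x <= psi y.
Proof.
  intros Hxy Hy. destruct (Req_dec x y) as [->|Hne]; [lra|].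
  destruct (psi_mvt x y) as [c [Hc Hpsi_xy]]; [lra|lra|].
  destruct Hpsi as (_ & _ & _ & _ & _ & Hpos & _).
  assert (0 < Derive psi c) by (apply Hpos; lra). nra.
Qed.

Lemma psi_slopes_antitone x y z : 0 < x < y -> y < z <= r0 ->
  (psi z - psi y) * (y - x) <= (psi y - psi x) * (z - y).
Proof.
  intros Hxy Hyz.
  destruct (psi_mvt x y) as [c1 [Hc1 ->]]; [lra|lra|].
  destruct (psi_mvt y z) as [c2 [Hc2 ->]]; [lra|lra|].
  destruct Hpsi as (_ & _ & _ & _ & _ & _ & Hdec).
  assert (Derive psi c2 < Derive psi c1) by (apply Hdec; lra).
  assert (0 < (y - x) * (z - y)) by (apply Rmult_lt_0_compat; lra).
  nra.
Qed.

Lemma psi_chord_to_r0 u v : 0 < u < v -> v < r0 ->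
  (v - u) * (1 - psi u) <= (psi v - psi u) * (r0 - u).
Proof.
  intros Huv Hv.
  assert (Hone : psi r0 = 1) by (apply Hpsi; lra).
  assert (Hs := psi_slopes_antitone u v r0 Huv ltac:(lra)).
  rewrite Hone in Hs. nra.
Qed.

(* Compare with the chord over [u/2, u], whose slope is at most psi u / u as (1/2)^al >= 1/2. *)
Lemma psi_increment_upper u v : 0 < u <= r0 / 2 -> u < v < r0 ->
  (psi v - psi u) * u <= psi u * (v - u).
Proof.
  intros Hu Huv.
  assert (Hs := psi_slopes_antitone (u / 2) u v ltac:(lra) ltac:(lra)).
  assert (Hhalf : psi u / 2 <= psi (u / 2)).
  { rewrite !psi_power by lra.
    replace (u / 2 / r0) with (/ 2 * (u / r0)) by (field; lra).
    rewrite <- Rpower_mult_distr by (try apply Rdiv_lt_0_compat; lra).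
    assert (Hhalf_al : Rpower (/ 2) 1 <= Rpower (/ 2) al) by (apply Rpower_le_exp_base_le1; lra).
    rewrite Rpower_1 in Hhalf_al by lra.
    assert (0 < Rpower (u / r0) al) by apply Rpower_pos. nra. }
  nra.
Qed.

End Psi.

Section StablePsiGap.
Variables (r0 al mu : R) (psi : R -> R) (a1 a2 d1 d2 : R).
Hypothesis Hr0 : 0 < r0 < 1.
Hypothesis Hal : 0 < al < 1.
Hypothesis Hpsi : admissible_psi r0 al psi.
Hypothesis Hmu : 0 < mu < 1.
Hypothesis Hdom : Rabs a1 <= Rabs a2.
Hypothesis Hin : a1 ^ 2 + a2 ^ 2 <= r0 / 2.
Hypothesis Hd1 : Rabs d1 <= mu * d2.
Hypothesis Hd2 : 0 < d2.
Hypothesis Hsmall : d2 <= (1 - mu) / 72 * Rabs a2.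

Lemma stable_increment_pos : 0 < a2 ->
  2 * (1 - mu) * a2 * d2 <= ((a1 + d1) ^ 2 + (a2 + d2) ^ 2) - (a1 ^ 2 + a2 ^ 2) <=
  (a1 ^ 2 + a2 ^ 2) / 16.
Proof.
  intros Ha2. rewrite (Rabs_right a2) in Hdom, Hsmall by lra.
  destruct (Rabs_mult_bounds a1 d1 a2 (mu * d2) Hdom Hd1) as [Hp1 Hp2].
  assert (Hq := sq_le_of_Rabs_le d1 (mu * d2) Hd1).
  assert (0 <= a1 ^ 2) by apply pow2_ge_0.
  split; [nra|].
  assert (Hd2a : d2 <= a2 / 72) by nra.
  assert (a2 * d2 <= a2 ^ 2 / 72)
    by (replace (a2 ^ 2 / 72) with (a2 * (a2 / 72)) by field; apply Rmult_le_compat_l; lra).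
  assert (d2 ^ 2 <= (a2 / 72) ^ 2) by (apply pow_incr; lra).
  assert (0 <= (1 - mu) * (a2 * d2)) by (apply Rmult_le_pos; nra).
  assert ((mu * d2) ^ 2 <= d2 ^ 2) by (apply pow_incr; nra).
  nra.
Qed.

Lemma stable_increment_neg : a2 < 0 ->
  ((a1 + d1) ^ 2 + (a2 + d2) ^ 2) - (a1 ^ 2 + a2 ^ 2) <= - (71 / 36 * (1 - mu) * - a2 * d2).
Proof.
  intros Ha2. rewrite (Rabs_left a2) in Hdom, Hsmall by lra.
  destruct (Rabs_mult_bounds a1 d1 (- a2) (mu * d2) Hdom Hd1) as [Hp1 Hp2].
  assert (Hq := sq_le_of_Rabs_le d1 (mu * d2) Hd1).
  assert ((mu * d2) ^ 2 <= d2 ^ 2) by (apply pow_incr; nra).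
  assert (d2 ^ 2 <= d2 * ((1 - mu) / 72 * - a2))
    by (replace (d2 ^ 2) with (d2 * d2) by ring; apply Rmult_le_compat_l; lra).
  nra.
Qed.

Lemma stable_normalized_bounds :
  0 < a2 ^ 2 / r0 <= (a1 ^ 2 + a2 ^ 2) / r0 /\ (a1 ^ 2 + a2 ^ 2) / r0 <= 2 * (a2 ^ 2 / r0).
Proof.
  assert (Ha2 : a2 <> 0) by (intros ->; rewrite Rabs_R0 in Hsmall; lra).
  assert (Ha1 : a1 ^ 2 <= a2 ^ 2)
    by (rewrite <- (pow2_abs a2); apply sq_le_of_Rabs_le, Hdom).
  assert (0 < a2 ^ 2) by (apply pow2_gt_0; exact Ha2).
  assert (0 <= a1 ^ 2) by apply pow2_ge_0.
  split; [split|]; [apply Rdiv_lt_0_compat; lra|apply Rdiv_le_mono_r; lra|].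
  replace (2 * (a2 ^ 2 / r0)) with (2 * a2 ^ 2 / r0) by (field; lra).
  apply Rdiv_le_mono_r; lra.
Qed.

Lemma stable_psi_gap_pos_inner : 0 < a2 -> (a1 + d1) ^ 2 + (a2 + d2) ^ 2 <= r0 / 2 ->
  d2 * (1 - mu) * al * Rpower (a2 ^ 2 / r0) al / 2 <=
  a2 * (psi ((a1 + d1) ^ 2 + (a2 + d2) ^ 2) - psi (a1 ^ 2 + a2 ^ 2)).
Proof.
  intros Ha2 Hv.
  destruct stable_increment_pos as [Hlow Hup]; [exact Ha2|].
  destruct stable_normalized_bounds as [HS HUS].
  assert (Hu : 0 < a1 ^ 2 + a2 ^ 2) by (apply Rmult_lt_reg_r with (/ r0); [apply Rinv_0_lt_compat|]; lra).
  set (u := a1 ^ 2 + a2 ^ 2) in *. set (v := (a1 + d1) ^ 2 + (a2 + d2) ^ 2) in *.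
  assert (HwU : 0 < 2 * (1 - mu) * a2 * d2) by (apply Rmult_lt_0_compat; [nra|lra]).
  rewrite !(psi_power r0 al psi Hpsi) by lra.
  set (S := a2 ^ 2 / r0) in *. set (U := u / r0) in *. set (V := v / r0).
  assert (HUV : U < V <= 3 * S).
  { split; [apply Rdiv_lt_mono_r; lra|].
    apply Rle_trans with (17 / 16 * U); [|lra].
    replace (17 / 16 * U) with (17 / 16 * u / r0) by (unfold U; field; lra).
    apply Rdiv_le_mono_r; lra. }
  assert (Hinc := Rpower_increment_near S U V al HS HUV Hal).
  assert (HVU : 2 * (1 - mu) * a2 * d2 / r0 <= V - U).
  { replace (V - U) with ((v - u) / r0) by (unfold U, V; field; lra). apply Rdiv_le_mono_r; lra. }
  assert (HA : 0 < al * Rpower S al) by (apply Rmult_lt_0_compat; [lra|apply Rpower_pos]).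
  assert (Hw : a2 * (2 * (1 - mu) * a2 * d2 / r0) = 2 * (1 - mu) * d2 * S) by (unfold S; field; lra).
  apply Rmult_le_reg_l with (3 * S); [lra|].
  apply Rle_trans with (al * Rpower S al * (a2 * (2 * (1 - mu) * a2 * d2 / r0))).
  { rewrite Hw. assert (0 <= (1 - mu) * d2 * S) by (apply Rmult_le_pos; [apply Rmult_le_pos|]; lra).
    nra. }
  apply Rle_trans with (a2 * (al * Rpower S al * (V - U))).
  { rewrite <- Rmult_assoc, (Rmult_comm (al * Rpower S al) a2), Rmult_assoc.
    apply Rmult_le_compat_l; [lra|]. apply Rmult_le_compat_l; lra. }
  assert (a2 * (al * Rpower S al * (V - U)) <= a2 * (3 * S * (Rpower V al - Rpower U al)))
    by (apply Rmult_le_compat_l; lra).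
  lra.
Qed.

(* Beyond r0 / 2 psi is no longer a power; the chord to (r0, psi r0 = 1) replaces it. *)
Lemma stable_psi_gap_pos_outer : 0 < a2 -> r0 / 2 < (a1 + d1) ^ 2 + (a2 + d2) ^ 2 ->
  d2 * (1 - mu) * al * Rpower (a2 ^ 2 / r0) al / 2 <=
  a2 * (psi ((a1 + d1) ^ 2 + (a2 + d2) ^ 2) - psi (a1 ^ 2 + a2 ^ 2)).
Proof.
  intros Ha2 Hv.
  destruct stable_increment_pos as [Hlow Hup]; [exact Ha2|].
  destruct stable_normalized_bounds as [HS HUS].
  assert (Hu : 0 < a1 ^ 2 + a2 ^ 2) by (apply Rmult_lt_reg_r with (/ r0); [apply Rinv_0_lt_compat|]; lra).
  set (u := a1 ^ 2 + a2 ^ 2) in *. set (v := (a1 + d1) ^ 2 + (a2 + d2) ^ 2) in *.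
  assert (HwU : 0 < 2 * (1 - mu) * a2 * d2) by (apply Rmult_lt_0_compat; [nra|lra]).
  assert (Hchord := psi_chord_to_r0 r0 al psi (proj2 Hr0) Hpsi u v ltac:(lra) ltac:(lra)).
  rewrite (psi_power r0 al psi Hpsi u) in Hchord |- * by lra.
  set (S := a2 ^ 2 / r0) in *. set (U := u / r0) in *.
  assert (HU : 5 / 11 <= U <= 1 / 2).
  { split; apply Rmult_le_reg_r with r0; unfold U; try lra;
      replace (u / r0 * r0) with u by (field; lra); lra. }
  assert (Hfar := Rpower_increment_far S U al HU HS HUS Hal).
  assert (Hr0u : r0 - u = r0 * (1 - U)) by (unfold U; field; lra).
  assert (Ha2S : a2 * a2 = S * r0) by (unfold S; field; lra).
  assert (Hpow := one_sub_Rpower_ge U al ltac:(lra) ltac:(lra)).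
  assert (0 < Rpower U al) by apply Rpower_pos.
  assert (0 <= 1 - Rpower U al) by nra.
  apply Rmult_le_reg_r with (r0 - u); [lra|].
  apply Rle_trans with (a2 * (2 * (1 - mu) * a2 * d2) * (1 - Rpower U al)).
  - replace (a2 * (2 * (1 - mu) * a2 * d2) * (1 - Rpower U al))
      with ((1 - mu) * d2 * r0 / 2 * (4 * S * (1 - Rpower U al))) by (unfold S; field; lra).
    rewrite Hr0u.
    replace (d2 * (1 - mu) * al * Rpower S al / 2 * (r0 * (1 - U)))
      with ((1 - mu) * d2 * r0 / 2 * (al * Rpower S al * (1 - U))) by field.
    apply Rmult_le_compat_l; [|exact Hfar].
    apply Rmult_le_pos; [apply Rmult_le_pos; [apply Rmult_le_pos|]|]; lra.
  - apply Rle_trans with (a2 * ((v - u) * (1 - Rpower U al))).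
    + rewrite Rmult_assoc. apply Rmult_le_compat_l; [lra|].
      apply Rmult_le_compat_r; lra.
    + rewrite Rmult_assoc. apply Rmult_le_compat_l; lra.
Qed.

Lemma stable_psi_gap_neg : a2 < 0 ->
  d2 * (1 - mu) * al * Rpower (a2 ^ 2 / r0) al / 2 <=
  (a2 + d2) * (psi ((a1 + d1) ^ 2 + (a2 + d2) ^ 2) - psi (a1 ^ 2 + a2 ^ 2)).
Proof.
  intros Ha2.
  assert (Hinc := stable_increment_neg Ha2).
  assert (Hsmall_neg := Hsmall). rewrite (Rabs_left a2) in Hsmall_neg by lra.
  assert (Ha2d2 : a2 + d2 < 0) by nra.
  assert (Hvpos : 0 < (a1 + d1) ^ 2 + (a2 + d2) ^ 2)
    by (assert (0 < (a2 + d2) ^ 2) by (apply pow2_gt_0; lra); assert (0 <= (a1 + d1) ^ 2) by apply pow2_ge_0; lra).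
  destruct stable_normalized_bounds as [HS HUS].
  assert (Hu : 0 < a1 ^ 2 + a2 ^ 2) by (apply Rmult_lt_reg_r with (/ r0); [apply Rinv_0_lt_compat|]; lra).
  set (u := a1 ^ 2 + a2 ^ 2) in *. set (v := (a1 + d1) ^ 2 + (a2 + d2) ^ 2) in *.
  assert (Hgap : 0 < 71 / 36 * (1 - mu) * - a2 * d2) by (apply Rmult_lt_0_compat; [nra|lra]).
  rewrite !(psi_power r0 al psi Hpsi) by lra.
  set (S := a2 ^ 2 / r0) in *. set (U := u / r0) in *. set (V := v / r0).
  assert (HVU : 0 < V < U) by (split; [apply Rdiv_lt_0_compat|apply Rdiv_lt_mono_r]; lra).
  assert (Hdec := Rpower_decrement_lower S U V al HVU HS HUS Hal).
  assert (HUV : 71 / 36 * (1 - mu) * - a2 * d2 / r0 <= U - V).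
  { replace (U - V) with ((u - v) / r0) by (unfold U, V; field; lra). apply Rdiv_le_mono_r; lra. }
  assert (Hprod : 71 / 72 * - a2 * (71 / 36 * (1 - mu) * - a2 * d2 / r0) <= (- a2 - d2) * (U - V)).
  { apply Rmult_le_compat; [lra|apply Rdiv_le_0_compat; lra|nra|lra]. }
  replace (71 / 72 * - a2 * (71 / 36 * (1 - mu) * - a2 * d2 / r0))
    with (71 * 71 / (72 * 36) * ((1 - mu) * d2 * S)) in Hprod by (unfold S; field; lra).
  assert (HA : 0 < al * Rpower S al) by (apply Rmult_lt_0_compat; [lra|apply Rpower_pos]).
  assert (0 <= (1 - mu) * d2 * S) by (apply Rmult_le_pos; [apply Rmult_le_pos|]; lra).
  assert (al * Rpower S al * (71 * 71 / (72 * 36) * ((1 - mu) * d2 * S))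
               <= al * Rpower S al * ((- a2 - d2) * (U - V)))
    by (apply Rmult_le_compat_l; lra).
  assert ((- a2 - d2) * (al * Rpower S al * (U - V))
               <= (- a2 - d2) * (2 * S * (Rpower U al - Rpower V al)))
    by (apply Rmult_le_compat_l; lra).
  apply Rmult_le_reg_l with (2 * S); [lra|].
  nra.
Qed.

Lemma stable_psi_gap :
  d2 * (1 - mu) * al * Rpower (a2 ^ 2 / r0) al / 2 <=
  (a2 + d2) * (psi ((a1 + d1) ^ 2 + (a2 + d2) ^ 2) - psi (a1 ^ 2 + a2 ^ 2)).
Proof.
  destruct (Rtotal_order a2 0) as [Hneg|[Hzero|Hpos]].
  - exact (stable_psi_gap_neg Hneg).
  - rewrite Hzero, Rabs_R0 in Hsmall. lra.
  - destruct (stable_increment_pos Hpos) as [Hlow Hup].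
    assert (Hmono : psi (a1 ^ 2 + a2 ^ 2) <= psi ((a1 + d1) ^ 2 + (a2 + d2) ^ 2)).
    { assert (0 < a2 ^ 2) by (apply pow2_gt_0; lra). assert (0 <= a1 ^ 2) by apply pow2_ge_0.
      assert (0 < 2 * (1 - mu) * a2 * d2) by (apply Rmult_lt_0_compat; [nra|lra]).
      apply (psi_increasing r0 al psi (proj2 Hr0) Hpsi); lra. }
    apply Rle_trans with (a2 * (psi ((a1 + d1) ^ 2 + (a2 + d2) ^ 2) - psi (a1 ^ 2 + a2 ^ 2))).
    + destruct (Rle_dec ((a1 + d1) ^ 2 + (a2 + d2) ^ 2) (r0 / 2)).
      * apply stable_psi_gap_pos_inner; assumption.
      * apply stable_psi_gap_pos_outer; [assumption|lra].
    + apply Rmult_le_compat_r; lra.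
Qed.

End StablePsiGap.

Section UnstablePsiGap.
Variables (r0 al mu : R) (psi : R -> R) (a1 a2 d1 d2 : R).
Hypothesis Hr0 : 0 < r0 < 1.
Hypothesis Hal : 0 < al < 1.
Hypothesis Hpsi : admissible_psi r0 al psi.
Hypothesis Hmu : 0 < mu < 1.
Hypothesis Hdom : Rabs a2 <= Rabs a1.
Hypothesis Hin : a1 ^ 2 + a2 ^ 2 <= r0 / 2.
Hypothesis Hd1 : Rabs d1 <= mu * d2.
Hypothesis Hd2 : 0 < d2.
Hypothesis Hsmall : d2 <= (1 - mu) / 72 * Rabs a1.

Lemma unstable_increment :
  0 < a1 ^ 2 + a2 ^ 2 /\
  Rabs (((a1 + d1) ^ 2 + (a2 + d2) ^ 2) - (a1 ^ 2 + a2 ^ 2)) <= (a1 ^ 2 + a2 ^ 2) / 16.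
Proof.
  set (x := Rabs a1) in *.
  assert (Hx : 0 < x) by (assert (0 <= (1 - mu) / 72 * x) by lra; nra).
  assert (Ha1 : a1 ^ 2 = x ^ 2) by (symmetry; apply pow2_abs).
  assert (0 <= a2 ^ 2) by apply pow2_ge_0.
  destruct (Rabs_mult_bounds a1 d1 x (mu * d2) (Rle_refl _) Hd1) as [Hp1 Hp2].
  destruct (Rabs_mult_bounds a2 d2 x d2 Hdom (Req_le _ _ (Rabs_right d2 ltac:(lra)))) as [Hq1 Hq2].
  assert (Hd1sq := sq_le_of_Rabs_le d1 (mu * d2) Hd1).
  assert ((mu * d2) ^ 2 <= d2 ^ 2) by (apply pow_incr; nra).
  assert (Hd2x : d2 <= x / 72) by nra.
  assert (x * d2 <= x ^ 2 / 72)
    by (replace (x ^ 2 / 72) with (x * (x / 72)) by field; apply Rmult_le_compat_l; lra).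
  assert (d2 ^ 2 <= (x / 72) ^ 2) by (apply pow_incr; lra).
  assert (0 <= (1 - mu) * (x * d2)) by (apply Rmult_le_pos; nra).
  split; [nra|]. apply Rabs_le_between. split; nra.
Qed.

Lemma unstable_increment_pos : 0 < a2 ->
  a2 * ((a1 ^ 2 + a2 ^ 2) - ((a1 + d1) ^ 2 + (a2 + d2) ^ 2)) <= mu * (a1 ^ 2 + a2 ^ 2) * d2 /\
  (1 - (1 - mu) / 36) * (a1 ^ 2 + a2 ^ 2) <= (a1 + d1) ^ 2 + (a2 + d2) ^ 2.
Proof.
  intros Ha2.
  assert (Hx : 0 < Rabs a1) by (assert (0 <= (1 - mu) / 72 * Rabs a1) by lra; nra).
  assert (Ha1 : a1 ^ 2 = Rabs a1 ^ 2) by (symmetry; apply pow2_abs).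
  rewrite (Rabs_right a2) in Hdom by lra.
  set (x := Rabs a1) in *.
  destruct (Rabs_mult_bounds a1 d1 x (mu * d2) (Rle_refl _) Hd1) as [Hp1 Hp2].
  assert (Hsq : 0 <= d1 ^ 2 + d2 ^ 2) by (assert (0 <= d1 ^ 2) by apply pow2_ge_0; nra).
  assert (Hdec : (a1 ^ 2 + a2 ^ 2) - ((a1 + d1) ^ 2 + (a2 + d2) ^ 2) <= 2 * mu * x * d2) by nra.
  assert (H2ax : 2 * a2 * x <= a1 ^ 2 + a2 ^ 2) by nra.
  assert (Hxd : x * d2 <= (1 - mu) / 72 * x ^ 2)
    by (replace ((1 - mu) / 72 * x ^ 2) with (x * ((1 - mu) / 72 * x)) by ring;
        apply Rmult_le_compat_l; lra).
  split.
  - assert (a2 * ((a1 ^ 2 + a2 ^ 2) - ((a1 + d1) ^ 2 + (a2 + d2) ^ 2)) <= a2 * (2 * mu * x * d2))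
      by (apply Rmult_le_compat_l; lra).
    assert (0 <= mu * d2 * ((a1 ^ 2 + a2 ^ 2) - 2 * a2 * x)) by (apply Rmult_le_pos; nra).
    nra.
  - assert (mu * x * d2 <= x * d2) by (assert (0 <= x * d2) by nra; nra).
    assert ((1 - mu) / 36 * x ^ 2 <= (1 - mu) / 36 * (a1 ^ 2 + a2 ^ 2))
      by (apply Rmult_le_compat_l; nra).
    lra.
Qed.

Lemma unstable_psi_gap_pos : 0 < a2 ->
  (a1 + d1) ^ 2 + (a2 + d2) ^ 2 < a1 ^ 2 + a2 ^ 2 ->
  a2 * (psi (a1 ^ 2 + a2 ^ 2) - psi ((a1 + d1) ^ 2 + (a2 + d2) ^ 2)) <= d2 * psi (a1 ^ 2 + a2 ^ 2).
Proof.
  intros Ha2 Hvu.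
  destruct unstable_increment as [Hu Hinc]. apply Rabs_le_between in Hinc.
  destruct (unstable_increment_pos Ha2) as [Hdec Hcv].
  set (u := a1 ^ 2 + a2 ^ 2) in *. set (v := (a1 + d1) ^ 2 + (a2 + d2) ^ 2) in *.
  set (c := 1 - (1 - mu) / 36) in *.
  rewrite !(psi_power r0 al psi Hpsi) by lra.
  set (U := u / r0). set (V := v / r0).
  assert (HcUV : 0 < c * U <= V).
  { split; [apply Rmult_lt_0_compat; [unfold c; lra|apply Rdiv_lt_0_compat; lra]|].
    unfold U, V. replace (c * (u / r0)) with (c * u / r0) by (field; lra).
    apply Rdiv_le_mono_r; lra. }
  assert (HVU : V < U) by (apply Rdiv_lt_mono_r; lra).
  assert (Hup := Rpower_decrement_upper U V c al HcUV HVU Hal).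
  assert (HaUV : a2 * (U - V) <= mu * U * d2).
  { replace (a2 * (U - V)) with (a2 * (u - v) / r0) by (unfold U, V; field; lra).
    replace (mu * U * d2) with (mu * u * d2 / r0) by (unfold U; field; lra).
    apply Rdiv_le_mono_r; lra. }
  assert (HUal : 0 < Rpower U al) by apply Rpower_pos.
  assert (HU : 0 < U) by (apply Rdiv_lt_0_compat; lra).
  assert (Hc : mu <= c) by (unfold c; lra).
  apply Rmult_le_reg_l with (c * U); [nra|].
  assert (a2 * (c * (Rpower U al - Rpower V al) * U) <= a2 * (al * Rpower U al * (U - V)))
    by (apply Rmult_le_compat_l; lra).
  assert (al * Rpower U al * (a2 * (U - V)) <= al * Rpower U al * (mu * U * d2))
    by (apply Rmult_le_compat_l; [apply Rmult_le_pos|]; lra).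
  assert (0 <= (c - al * mu) * (U * d2 * Rpower U al))
    by (apply Rmult_le_pos; [nra|apply Rmult_le_pos; [apply Rmult_le_pos|]; lra]).
  nra.
Qed.

Lemma unstable_psi_gap_neg : a2 < 0 ->
  a1 ^ 2 + a2 ^ 2 < (a1 + d1) ^ 2 + (a2 + d2) ^ 2 ->
  - a2 * (psi ((a1 + d1) ^ 2 + (a2 + d2) ^ 2) - psi (a1 ^ 2 + a2 ^ 2)) <= d2 * psi (a1 ^ 2 + a2 ^ 2).
Proof.
  intros Ha2 Huv.
  destruct unstable_increment as [Hu Hinc]. apply Rabs_le_between in Hinc.
  assert (Hx : 0 < Rabs a1) by (assert (0 <= (1 - mu) / 72 * Rabs a1) by lra; nra).
  assert (Ha1 : a1 ^ 2 = Rabs a1 ^ 2) by (symmetry; apply pow2_abs).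
  rewrite (Rabs_left a2) in Hdom by lra.
  set (x := Rabs a1) in *.
  destruct (Rabs_mult_bounds a1 d1 x (mu * d2) (Rle_refl _) Hd1) as [Hp1 Hp2].
  assert (Hd1sq := sq_le_of_Rabs_le d1 (mu * d2) Hd1).
  assert ((mu * d2) ^ 2 <= d2 ^ 2) by (apply pow_incr; nra).
  set (u := a1 ^ 2 + a2 ^ 2) in *. set (v := (a1 + d1) ^ 2 + (a2 + d2) ^ 2) in *.
  assert (Hinc2 : v - u <= 2 * mu * x * d2 + 2 * d2 ^ 2) by (unfold u, v; nra).
  assert (H2ax : 2 * - a2 * x <= u) by (unfold u; nra).
  assert (Hxd : x * d2 <= (1 - mu) / 72 * x ^ 2)
    by (replace ((1 - mu) / 72 * x ^ 2) with (x * ((1 - mu) / 72 * x)) by ring;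
        apply Rmult_le_compat_l; lra).
  assert (Hyvu : - a2 * (v - u) <= u * d2).
  { assert (- a2 * (v - u) <= - a2 * (2 * mu * x * d2 + 2 * d2 ^ 2))
      by (apply Rmult_le_compat_l; lra).
    assert (0 <= mu * d2 * (u - 2 * - a2 * x)) by (apply Rmult_le_pos; nra).
    assert (- a2 * d2 ^ 2 <= x * d2 ^ 2) by (apply Rmult_le_compat_r; [apply pow2_ge_0|lra]).
    assert (x * d2 ^ 2 <= (1 - mu) / 72 * x ^ 2 * d2)
      by (replace (x * d2 ^ 2) with (x * d2 * d2) by ring; apply Rmult_le_compat_r; lra).
    assert ((1 - mu) / 72 * x ^ 2 * d2 <= (1 - mu) / 72 * u * d2)
      by (apply Rmult_le_compat_r; [lra|]; apply Rmult_le_compat_l; unfold u; nra).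
    nra. }
  assert (Hupper := psi_increment_upper r0 al psi (proj2 Hr0) Hal Hpsi u v
                      ltac:(lra) ltac:(lra)).
  assert (Hpu : 0 <= psi u) by (apply (psi_bounded r0 al psi Hpsi); lra).
  apply Rmult_le_reg_r with u; [lra|].
  assert (- a2 * ((psi v - psi u) * u) <= - a2 * (psi u * (v - u)))
    by (apply Rmult_le_compat_l; lra).
  assert (psi u * (- a2 * (v - u)) <= psi u * (u * d2)) by (apply Rmult_le_compat_l; lra).
  nra.
Qed.

Lemma unstable_psi_gap :
  0 <= (a2 + d2) * (psi ((a1 + d1) ^ 2 + (a2 + d2) ^ 2) - psi (a1 ^ 2 + a2 ^ 2))
       + 2 * d2 * psi (a1 ^ 2 + a2 ^ 2).
Proof.
  destruct unstable_increment as [Hu Hinc]. apply Rabs_le_between in Hinc.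
  assert (Hpu : 0 <= psi (a1 ^ 2 + a2 ^ 2)) by (apply (psi_bounded r0 al psi Hpsi); lra).
  assert (Hpv : 0 <= psi ((a1 + d1) ^ 2 + (a2 + d2) ^ 2))
    by (apply (psi_bounded r0 al psi Hpsi); lra).
  set (u := a1 ^ 2 + a2 ^ 2) in *. set (v := (a1 + d1) ^ 2 + (a2 + d2) ^ 2) in *.
  assert (Hmono : forall x y, 0 < x <= y -> y <= 17 / 16 * u -> psi x <= psi y)
    by (intros x y Hxy Hy; apply (psi_increasing r0 al psi (proj2 Hr0) Hpsi); lra).
  assert (0 <= d2 * psi v) by (apply Rmult_le_pos; lra).
  assert (0 <= d2 * psi u) by (apply Rmult_le_pos; lra).
  destruct (Rtotal_order a2 0) as [Hneg|[Hzero|Hpos]].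
  - destruct (Rlt_le_dec u v) as [Huv|Hvu].
    + assert (Hgap := unstable_psi_gap_neg Hneg Huv). fold u v in Hgap. nra.
    + assert (psi v <= psi u) by (apply Hmono; lra). nra.
  - subst a2. nra.
  - destruct (Rlt_le_dec v u) as [Hvu|Huv].
    + assert (Hgap := unstable_psi_gap_pos Hpos Hvu). fold u v in Hgap. nra.
    + assert (psi u <= psi v) by (apply Hmono; lra). nra.
Qed.

End UnstablePsiGap.

Section Flow.
Variables (psi : R -> R) (lam : R) (s1 s2 st1 st2 : R -> R) (t : R).
Hypothesis Hs : solves_at psi lam s1 s2 t.
Hypothesis Hst : solves_at psi lam st1 st2 t.

Lemma solution_abs_derive_stable : s2 t <> 0 ->
  is_derive (fun t => Rabs (s2 t)) t
    (- (Rabs (s2 t) * psi (s1 t ^ 2 + s2 t ^ 2) * ln lam)).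
Proof.
  intros Hnz. destruct Hs as [_ Hd2].
  replace (- (Rabs (s2 t) * psi (s1 t ^ 2 + s2 t ^ 2) * ln lam))
    with (sign (s2 t) * - (s2 t * psi (s1 t ^ 2 + s2 t ^ 2) * ln lam))
    by (rewrite <- sign_mul_self; ring).
  apply is_derive_Rabs; assumption.
Qed.

Lemma solution_abs_derive_unstable : s1 t <> 0 ->
  is_derive (fun t => Rabs (s1 t)) t (Rabs (s1 t) * psi (s1 t ^ 2 + s2 t ^ 2) * ln lam).
Proof.
  intros Hnz. destruct Hs as [Hd1 _].
  replace (Rabs (s1 t) * psi (s1 t ^ 2 + s2 t ^ 2) * ln lam)
    with (sign (s1 t) * (s1 t * psi (s1 t ^ 2 + s2 t ^ 2) * ln lam))
    by (rewrite <- sign_mul_self; ring).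
  apply is_derive_Rabs; assumption.
Qed.

Lemma gap_derive :
  is_derive (fun t => st2 t - s2 t) t
    (- (ln lam * ((st2 t - s2 t) * psi (s1 t ^ 2 + s2 t ^ 2)
        + st2 t * (psi (st1 t ^ 2 + st2 t ^ 2) - psi (s1 t ^ 2 + s2 t ^ 2))))).
Proof.
  destruct Hs as [_ Hd2]. destruct Hst as [_ Hdt2].
  match goal with |- is_derive _ _ ?e =>
    replace e with (- (st2 t * psi (st1 t ^ 2 + st2 t ^ 2) * ln lam)
                    - - (s2 t * psi (s1 t ^ 2 + s2 t ^ 2) * ln lam)) by ring end.
  exact (is_derive_minus _ _ _ _ _ Hdt2 Hd2).
Qed.

Lemma gap_over_stable_derive : s2 t <> 0 ->
  is_derive (fun t => (st2 t - s2 t) / Rabs (s2 t)) t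
    (- (ln lam * st2 t * (psi (st1 t ^ 2 + st2 t ^ 2) - psi (s1 t ^ 2 + s2 t ^ 2)))
     / Rabs (s2 t)).
Proof.
  intros Hnz. assert (Habs : Rabs (s2 t) <> 0) by (apply Rabs_no_R0; exact Hnz).
  match goal with |- is_derive _ _ ?e => replace e with
    ((- (ln lam * ((st2 t - s2 t) * psi (s1 t ^ 2 + s2 t ^ 2)
        + st2 t * (psi (st1 t ^ 2 + st2 t ^ 2) - psi (s1 t ^ 2 + s2 t ^ 2)))) * Rabs (s2 t)
      - (st2 t - s2 t) * - (Rabs (s2 t) * psi (s1 t ^ 2 + s2 t ^ 2) * ln lam))
     / Rabs (s2 t) ^ 2) by (field; exact Habs) end.
  apply (is_derive_div (fun t => st2 t - s2 t) (fun t => Rabs (s2 t)));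
    [apply gap_derive|apply solution_abs_derive_stable|]; assumption.
Qed.

Lemma gap_over_unstable_derive : s1 t <> 0 ->
  is_derive (fun t => (st2 t - s2 t) / Rabs (s1 t)) t
    (- (ln lam * (st2 t * (psi (st1 t ^ 2 + st2 t ^ 2) - psi (s1 t ^ 2 + s2 t ^ 2))
        + 2 * (st2 t - s2 t) * psi (s1 t ^ 2 + s2 t ^ 2))) / Rabs (s1 t)).
Proof.
  intros Hnz. assert (Habs : Rabs (s1 t) <> 0) by (apply Rabs_no_R0; exact Hnz).
  match goal with |- is_derive _ _ ?e => replace e with
    ((- (ln lam * ((st2 t - s2 t) * psi (s1 t ^ 2 + s2 t ^ 2)
        + st2 t * (psi (st1 t ^ 2 + st2 t ^ 2) - psi (s1 t ^ 2 + s2 t ^ 2)))) * Rabs (s1 t)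
      - (st2 t - s2 t) * (Rabs (s1 t) * psi (s1 t ^ 2 + s2 t ^ 2) * ln lam))
     / Rabs (s1 t) ^ 2) by (field; exact Habs) end.
  apply (is_derive_div (fun t => st2 t - s2 t) (fun t => Rabs (s1 t)));
    [apply gap_derive|apply solution_abs_derive_unstable|]; assumption.
Qed.

Lemma solution_abs_Rpower_derive_stable e : s2 t <> 0 ->
  is_derive (fun t => Rpower (Rabs (s2 t)) e) t
    (- e * psi (s1 t ^ 2 + s2 t ^ 2) * ln lam * Rpower (Rabs (s2 t)) e).
Proof.
  intros Hnz. assert (Habs : 0 < Rabs (s2 t)) by (apply Rabs_pos_lt; exact Hnz).
  assert (Hpow : is_derive (fun x => Rpower x e) (Rabs (s2 t)) (e * Rpower (Rabs (s2 t)) (e - 1)))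
    by (apply is_derive_Reals, derivable_pt_lim_power; exact Habs).
  assert (Hcomp := is_derive_comp (fun x => Rpower x e) (fun t => Rabs (s2 t)) t _ _
                 Hpow (solution_abs_derive_stable Hnz)).
  match goal with |- is_derive _ _ ?d => replace d with
    (- (Rabs (s2 t) * psi (s1 t ^ 2 + s2 t ^ 2) * ln lam) * (e * Rpower (Rabs (s2 t)) (e - 1)))
  end.
  - exact Hcomp.
  - rewrite <- (Rpower_pred_mul (Rabs (s2 t)) e Habs). ring.
Qed.

End Flow.

Section GapRatios.
Variables (lam alpha r0 mu T : R) (psi s1 s2 st1 st2 : R -> R).
Hypothesis Hlam : 1 < lam.
Hypothesis Halpha : 0 < alpha < 1.
Hypothesis Hr0 : 0 < r0 < 1.
Hypothesis Hpsi : admissible_psi r0 alpha psi.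
Hypothesis Hmu : 0 < mu < 1.
Hypothesis HT : 0 < T.
Hypothesis Hs_sol : forall t, 0 <= t <= T -> solves_at psi lam s1 s2 t.
Hypothesis Hs_in : forall t, 0 <= t <= T -> inD (r0 / 2) (s1 t) (s2 t).
Hypothesis Hs_first : forall t, 0 <= t <= T / 2 -> Rabs (s1 t) <= Rabs (s2 t).
Hypothesis Hs_second : forall t, T / 2 <= t <= T -> Rabs (s2 t) <= Rabs (s1 t).
Hypothesis Hs_nz : forall t, 0 <= t <= T -> s1 t <> 0 /\ s2 t <> 0.
Hypothesis Hst_sol : forall t, 0 <= t <= T -> solves_at psi lam st1 st2 t.
Hypothesis Hcone : forall t, 0 <= t <= T ->
  0 < st2 t - s2 t /\ Rabs (st1 t - s1 t) <= mu * (st2 t - s2 t).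
Hypothesis Hgap0 : Rabs ((st2 0 - s2 0) / s2 0) < (1 - mu) / 72.

Let F t := psi (s1 t ^ 2 + s2 t ^ 2).
Let Ft t := psi (st1 t ^ 2 + st2 t ^ 2).
Let p t := (st2 t - s2 t) / Rabs (s2 t).
Let q t := (st2 t - s2 t) / Rabs (s1 t).
Let dp t := - (ln lam * st2 t * (Ft t - F t)) / Rabs (s2 t).
Let dq t := - (ln lam * (st2 t * (Ft t - F t) + 2 * (st2 t - s2 t) * F t)) / Rabs (s1 t).
Let beta := (1 - mu) / Rpower 2 (alpha + 2).
Let K := Rpower 2 alpha * (2 * alpha * ln lam / Rpower r0 alpha).

Lemma ln_lam_pos : 0 < ln lam.
Proof. rewrite <- ln_1. apply ln_increasing; lra. Qed.

Lemma K_pos : 0 < K.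
Proof.
  assert (Hl := ln_lam_pos). unfold K. apply Rmult_lt_0_compat; [apply Rpower_pos|].
  apply Rdiv_lt_0_compat; [nra|apply Rpower_pos].
Qed.

Lemma beta_pos : 0 < beta.
Proof. apply Rdiv_lt_0_compat; [lra|apply Rpower_pos]. Qed.

Lemma coordinates_keep_sign t : 0 <= t <= T -> 0 < s1 0 * s1 t /\ 0 < s2 0 * s2 t.
Proof.
  intros Ht. split; apply (continuous_nonvanishing_same_sign _ 0 T); try exact Ht;
    intros x Hx; try apply Hs_nz, Hx.
  - exact (is_derive_continuity_pt _ _ _ (proj1 (Hs_sol x Hx))).
  - exact (is_derive_continuity_pt _ _ _ (proj2 (Hs_sol x Hx))).
Qed.

Lemma stable_ratio_pos t : 0 <= t <= T -> 0 < p t.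
Proof.
  intros Ht. destruct (Hcone t Ht) as [Hd _]. destruct (Hs_nz t Ht) as [_ Hnz].
  apply Rdiv_lt_0_compat; [exact Hd|apply Rabs_pos_lt, Hnz].
Qed.

Lemma stable_ratio_small : p 0 < (1 - mu) / 72.
Proof.
  destruct (Hcone 0 ltac:(lra)) as [Hd _].
  unfold p. rewrite Rabs_div in Hgap0 by (apply Hs_nz; lra).
  rewrite (Rabs_right (st2 0 - s2 0)) in Hgap0 by lra. exact Hgap0.
Qed.

Lemma stable_Rpower_derive_bound t : 0 <= t <= T / 2 ->
  - - (2 * alpha) * F t * ln lam * Rpower (Rabs (s2 t)) (- (2 * alpha)) <= K.
Proof.
  intros Ht. assert (Ht' : 0 <= t <= T) by lra.
  destruct (Hs_nz t Ht') as [_ Hnz].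
  assert (Hsq : 0 < s2 t ^ 2) by (apply pow2_gt_0; exact Hnz).
  assert (Hs1 : s1 t ^ 2 <= s2 t ^ 2)
    by (rewrite <- (pow2_abs (s2 t)); apply sq_le_of_Rabs_le, Hs_first; exact Ht).
  assert (0 <= s1 t ^ 2) by apply pow2_ge_0.
  assert (HL := ln_lam_pos).
  assert (Hin := Hs_in t Ht'). unfold inD in Hin.
  assert (HF : F t <= Rpower 2 alpha * Rpower (s2 t ^ 2 / r0) alpha).
  { unfold F. rewrite (psi_power r0 alpha psi Hpsi) by lra.
    rewrite Rpower_mult_distr by (try apply Rdiv_lt_0_compat; lra).
    apply Rle_Rpower_l; [lra|]. split; [apply Rdiv_lt_0_compat; lra|].
    replace (2 * (s2 t ^ 2 / r0)) with (2 * s2 t ^ 2 / r0) by (field; lra).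
    apply Rdiv_le_mono_r; lra. }
  assert (Hz : Rpower (Rabs (s2 t)) (- (2 * alpha)) * Rpower (s2 t ^ 2 / r0) alpha
               = / Rpower r0 alpha).
  { assert (0 < Rpower (s2 t ^ 2 / r0) alpha) by apply Rpower_pos.
    assert (0 < Rpower r0 alpha) by apply Rpower_pos.
    rewrite Rpower_Ropp, (Rpower_Rabs_double (s2 t) r0 alpha) by lra.
    field. lra. }
  assert (0 < Rpower (Rabs (s2 t)) (- (2 * alpha))) by apply Rpower_pos.
  assert (2 * alpha * ln lam * Rpower (Rabs (s2 t)) (- (2 * alpha)) * F t
          <= 2 * alpha * ln lam * Rpower (Rabs (s2 t)) (- (2 * alpha))
             * (Rpower 2 alpha * Rpower (s2 t ^ 2 / r0) alpha))
    by (apply Rmult_le_compat_l; [apply Rmult_le_pos; [apply Rmult_le_pos|]|]; lra).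
  replace K with (2 * alpha * ln lam * Rpower 2 alpha
                  * (Rpower (Rabs (s2 t)) (- (2 * alpha)) * Rpower (s2 t ^ 2 / r0) alpha))
    by (rewrite Hz; unfold K; field; apply Rgt_not_eq, Rpower_pos).
  lra.
Qed.

Lemma stable_Rpower_growth t : 0 <= t <= T / 2 ->
  Rpower (Rabs (s2 t)) (- (2 * alpha)) <= Rpower (Rabs (s2 0)) (- (2 * alpha)) + K * t.
Proof.
  intros Ht. destruct (Req_dec t 0) as [->|Hne]; [lra|].
  destruct (mvt_is_derive (fun t => Rpower (Rabs (s2 t)) (- (2 * alpha)))
              (fun t => - - (2 * alpha) * F t * ln lam * Rpower (Rabs (s2 t)) (- (2 * alpha))) 0 t)
    as [c [Hc Heq]]; [lra| |].
  - intros x Hx. apply (solution_abs_Rpower_derive_stable psi lam s1 s2 x);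
      [apply Hs_sol|apply Hs_nz]; lra.
  - assert (Hbound := stable_Rpower_derive_bound c ltac:(lra)).
    assert (Hbt : (- - (2 * alpha) * F c * ln lam * Rpower (Rabs (s2 c)) (- (2 * alpha))) * (t - 0)
                  <= K * (t - 0)) by (apply Rmult_le_compat_r; lra).
    lra.
Qed.

Lemma stable_ratio_rate t : 0 <= t <= T / 2 -> p t < (1 - mu) / 72 ->
  dp t <= - (beta * K * Rpower (Rabs (s2 t)) (2 * alpha)) * p t.
Proof.
  intros Ht Hp. assert (Ht' : 0 <= t <= T) by lra.
  destruct (Hs_nz t Ht') as [_ Hnz].
  assert (Habs : 0 < Rabs (s2 t)) by (apply Rabs_pos_lt; exact Hnz).
  destruct (Hcone t Ht') as [Hd2 Hd1].
  assert (Hsmall : st2 t - s2 t <= (1 - mu) / 72 * Rabs (s2 t)).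
  { unfold p in Hp. apply Rmult_lt_compat_r with (r := Rabs (s2 t)) in Hp; [|exact Habs].
    unfold Rdiv in Hp. rewrite Rmult_assoc, Rinv_l in Hp by lra. lra. }
  assert (Hgap := stable_psi_gap r0 alpha mu psi (s1 t) (s2 t) (st1 t - s1 t) (st2 t - s2 t)
                    Hr0 Halpha Hpsi Hmu (Hs_first t Ht) (Hs_in t Ht') Hd1 Hd2 Hsmall).
  replace (s1 t + (st1 t - s1 t)) with (st1 t) in Hgap by ring.
  replace (s2 t + (st2 t - s2 t)) with (st2 t) in Hgap by ring.
  change (psi (st1 t ^ 2 + st2 t ^ 2)) with (Ft t) in Hgap.
  change (psi (s1 t ^ 2 + s2 t ^ 2)) with (F t) in Hgap.
  assert (HL := ln_lam_pos).
  assert (Hbk : beta * K * Rpower (Rabs (s2 t)) (2 * alpha)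
                = (1 - mu) * alpha * ln lam * Rpower (s2 t ^ 2 / r0) alpha / 2).
  { assert (H4 : Rpower 2 (alpha + 2) = Rpower 2 alpha * 4).
    { rewrite Rpower_plus. f_equal. replace 2 with (INR 2) at 2 by (simpl; ring).
      rewrite Rpower_pow by lra. ring. }
    assert (0 < Rpower 2 alpha) by apply Rpower_pos.
    assert (0 < Rpower r0 alpha) by apply Rpower_pos.
    rewrite (Rpower_Rabs_double (s2 t) r0 alpha Hnz ltac:(lra)).
    unfold beta, K. rewrite H4. field. lra. }
  rewrite Hbk. unfold dp, p.
  apply Rmult_le_reg_r with (Rabs (s2 t)); [exact Habs|].
  unfold Rdiv. rewrite !Rmult_assoc, Rinv_l by lra.
  assert (Hscaled : ln lam * ((st2 t - s2 t) * (1 - mu) * alpha * Rpower (s2 t ^ 2 / r0) alpha / 2)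
          <= ln lam * (st2 t * (Ft t - F t))) by (apply Rmult_le_compat_l; lra).
  unfold Rdiv in Hscaled. lra.
Qed.

Lemma stable_Rpower_lower t : 0 <= t <= T / 2 ->
  Rpower (Rabs (s2 0)) (2 * alpha)
  <= Rpower (Rabs (s2 t)) (2 * alpha) * (1 + K * Rpower (Rabs (s2 0)) (2 * alpha) * t).
Proof.
  intros Ht. assert (Hgrowth := stable_Rpower_growth t Ht). rewrite !Rpower_Ropp in Hgrowth.
  set (y0 := Rpower (Rabs (s2 0)) (2 * alpha)) in *.
  set (yt := Rpower (Rabs (s2 t)) (2 * alpha)) in *.
  assert (Hy0 : 0 < y0) by apply Rpower_pos. assert (Hyt : 0 < yt) by apply Rpower_pos.
  apply Rmult_le_compat_l with (r := y0 * yt) in Hgrowth; [|nra].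
  replace (y0 * yt * / yt) with y0 in Hgrowth by (field; lra).
  replace (y0 * yt * (/ y0 + K * t)) with (yt * (1 + K * y0 * t)) in Hgrowth by (field; lra).
  exact Hgrowth.
Qed.

Lemma stable_ratio_decay : forall t, 0 <= t <= T / 2 ->
  p t <= p 0 * Rpower (1 + K * Rpower (Rabs (s2 0)) (2 * alpha) * t) (- beta).
Proof.
  assert (HK := K_pos). assert (Hbeta := beta_pos).
  apply (decay_while_small p dp (T / 2) ((1 - mu) / 72));
    [lra|left; apply Rmult_lt_0_compat; [exact HK|apply Rpower_pos]| | |apply stable_ratio_small|].
  - intros s Hs. apply (gap_over_stable_derive psi lam s1 s2 st1 st2 s);
      [apply Hs_sol|apply Hst_sol|apply Hs_nz]; lra.
  - intros s Hs. apply stable_ratio_pos. lra.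
  - intros s Hs HpM.
    assert (Hrate := stable_ratio_rate s Hs HpM).
    assert (Hcomp := stable_Rpower_lower s Hs).
    assert (Hps := stable_ratio_pos s ltac:(lra)).
    set (y0 := Rpower (Rabs (s2 0)) (2 * alpha)) in *.
    set (ys := Rpower (Rabs (s2 s)) (2 * alpha)) in *.
    assert (0 < y0) by apply Rpower_pos.
    assert (H1s : 0 < 1 + K * y0 * s) by (assert (0 <= K * y0 * s) by (apply Rmult_le_pos; nra); lra).
    assert (dp s * (1 + K * y0 * s) <= - (beta * K * ys) * p s * (1 + K * y0 * s))
      by (apply Rmult_le_compat_r; lra).
    assert (0 <= beta * K * p s * (ys * (1 + K * y0 * s) - y0))
      by (apply Rmult_le_pos; [apply Rmult_le_pos; [apply Rmult_le_pos|]|]; lra).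
    nra.
Qed.

Lemma stable_ratio_le_initial t : 0 <= t <= T / 2 -> p t <= p 0.
Proof.
  intros Ht. assert (Hdecay := stable_ratio_decay t Ht).
  assert (Hp0 := stable_ratio_pos 0 ltac:(lra)).
  assert (HK : 0 <= K * Rpower (Rabs (s2 0)) (2 * alpha) * t).
  { apply Rmult_le_pos; [|lra]. apply Rmult_le_pos; left; [apply K_pos|apply Rpower_pos]. }
  assert (Hbeta := beta_pos).
  assert (Rpower (1 + K * Rpower (Rabs (s2 0)) (2 * alpha) * t) (- beta) <= 1)
    by (apply Rle_trans with (Rpower 1 (- beta));
        [apply Rpower_le_base_nonpos; lra|rewrite Rpower_base_1; lra]).
  nra.
Qed.

Lemma ratios_at_switch : q (T / 2) = p (T / 2).
Proof. unfold p, q. f_equal. apply Rle_antisym; [apply Hs_first|apply Hs_second]; lra. Qed.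

Lemma unstable_ratio_monotone : forall t, T / 2 <= t <= T -> q t <= q (T / 2).
Proof.
  apply (nonincreasing_while_below q dq (T / 2) T ((1 - mu) / 72)); [lra| | |].
  - intros t Ht. apply (gap_over_unstable_derive psi lam s1 s2 st1 st2 t);
      [apply Hs_sol|apply Hst_sol|apply Hs_nz]; lra.
  - rewrite ratios_at_switch. apply Rle_lt_trans with (p 0); [apply stable_ratio_le_initial; lra|].
    apply stable_ratio_small.
  - intros t Ht HqM. assert (Ht' : 0 <= t <= T) by lra.
    destruct (Hs_nz t Ht') as [Hnz _].
    assert (Habs : 0 < Rabs (s1 t)) by (apply Rabs_pos_lt; exact Hnz).
    destruct (Hcone t Ht') as [Hd2 Hd1].
    assert (Hsmall : st2 t - s2 t <= (1 - mu) / 72 * Rabs (s1 t)).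
    { unfold q in HqM. apply Rmult_lt_compat_r with (r := Rabs (s1 t)) in HqM; [|exact Habs].
      unfold Rdiv in HqM. rewrite Rmult_assoc, Rinv_l in HqM by lra. lra. }
    assert (Hgap := unstable_psi_gap r0 alpha mu psi (s1 t) (s2 t) (st1 t - s1 t) (st2 t - s2 t)
                      Hr0 Halpha Hpsi Hmu (Hs_second t Ht) (Hs_in t Ht') Hd1 Hd2 Hsmall).
    replace (s1 t + (st1 t - s1 t)) with (st1 t) in Hgap by ring.
    replace (s2 t + (st2 t - s2 t)) with (st2 t) in Hgap by ring.
    change (psi (st1 t ^ 2 + st2 t ^ 2)) with (Ft t) in Hgap.
    change (psi (s1 t ^ 2 + s2 t ^ 2)) with (F t) in Hgap.
    assert (HL := ln_lam_pos).
    unfold dq, Rdiv. apply Rmult_le_0_r; [|left; apply Rinv_0_lt_compat; exact Habs].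
    assert (0 <= ln lam * (st2 t * (Ft t - F t) + 2 * (st2 t - s2 t) * F t))
      by (apply Rmult_le_pos; [lra|]; replace (st2 t) with (s2 t + (st2 t - s2 t)) at 1 by ring; lra).
    lra.
Qed.

Lemma stable_phase_bound : forall t, 0 <= t <= T / 2 ->
  st2 t - s2 t <= (st2 0 - s2 0) / s2 0 * s2 t *
    Rpower (1 + Rpower 2 alpha * (2 * alpha * ln lam / Rpower r0 alpha)
                * Rpower (Rabs (s2 0)) (2 * alpha) * t) (- beta).
Proof.
  intros t Ht. assert (Ht' : 0 <= t <= T) by lra.
  change (Rpower 2 alpha * (2 * alpha * ln lam / Rpower r0 alpha)) with K.
  destruct (coordinates_keep_sign t Ht') as [_ Hsign].
  assert (Habs : 0 < Rabs (s2 t)) by (apply Rabs_pos_lt, Hs_nz, Ht').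
  assert (Hdecay := stable_ratio_decay t Ht).
  assert (Habs0 : 0 < Rabs (s2 0)) by (apply Rabs_pos_lt, Hs_nz; lra).
  replace ((st2 0 - s2 0) / s2 0 * s2 t) with (p 0 * Rabs (s2 t)).
  2: { transitivity ((st2 0 - s2 0) * (s2 t / s2 0)); [|field; nra].
       rewrite (Rdiv_same_sign (s2 0) (s2 t) Hsign). unfold p. field. lra. }
  replace (st2 t - s2 t) with (p t * Rabs (s2 t)) by (unfold p; field; lra).
  rewrite Rmult_assoc, (Rmult_comm (Rabs (s2 t))), <- Rmult_assoc.
  apply Rmult_le_compat_r; lra.
Qed.

Lemma unstable_phase_bound : forall t, T / 2 <= t <= T ->
  0 < 1 - Rpower 2 alpha * (2 * alpha * ln lam / Rpower r0 alpha)
          * Rpower (Rabs (s1 (T / 2))) (2 * alpha) * (t - T / 2) ->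
  st2 t - s2 t <= (st2 (T / 2) - s2 (T / 2)) / s1 (T / 2) * s1 t *
    Rpower (1 - Rpower 2 alpha * (2 * alpha * ln lam / Rpower r0 alpha)
                * Rpower (Rabs (s1 (T / 2))) (2 * alpha) * (t - T / 2)) (- beta).
Proof.
  intros t Ht Hbase. assert (Ht' : 0 <= t <= T) by lra.
  change (Rpower 2 alpha * (2 * alpha * ln lam / Rpower r0 alpha)) with K in Hbase |- *.
  assert (Hfactor : 1 <= Rpower (1 - K * Rpower (Rabs (s1 (T / 2))) (2 * alpha) * (t - T / 2))
                                (- beta)).
  { assert (0 <= K * Rpower (Rabs (s1 (T / 2))) (2 * alpha) * (t - T / 2)).
    { apply Rmult_le_pos; [|lra]. apply Rmult_le_pos; left; [apply K_pos|apply Rpower_pos]. }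
    rewrite <- (Rpower_base_1 (- beta)) at 1.
    apply Rpower_le_base_nonpos; [lra|]. assert (Hbeta := beta_pos). lra. }
  assert (HsT1 : 0 < s1 (T / 2) * s1 t).
  { destruct (coordinates_keep_sign (T / 2) ltac:(lra)) as [H0T1 _].
    destruct (coordinates_keep_sign t Ht') as [H0t _].
    assert (0 < s1 0 * s1 0) by (assert (s1 0 <> 0) by (apply Hs_nz; lra); nra).
    assert (0 < s1 0 * s1 0 * (s1 (T / 2) * s1 t)) by nra.
    nra. }
  assert (Habs : 0 < Rabs (s1 t)) by (apply Rabs_pos_lt, Hs_nz, Ht').
  assert (HabsT1 : 0 < Rabs (s1 (T / 2))) by (apply Rabs_pos_lt, Hs_nz; lra).
  assert (Hq := unstable_ratio_monotone t Ht).
  assert (HqT1 : 0 < q (T / 2)).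
  { destruct (Hcone (T / 2) ltac:(lra)) as [Hd _]. apply Rdiv_lt_0_compat; lra. }
  replace ((st2 (T / 2) - s2 (T / 2)) / s1 (T / 2) * s1 t) with (q (T / 2) * Rabs (s1 t)).
  2: { transitivity ((st2 (T / 2) - s2 (T / 2)) * (s1 t / s1 (T / 2))); [|field; nra].
       rewrite (Rdiv_same_sign (s1 (T / 2)) (s1 t) HsT1). unfold q. field. lra. }
  replace (st2 t - s2 t) with (q t * Rabs (s1 t)) by (unfold q; field; lra).
  assert (q t * Rabs (s1 t) <= q (T / 2) * Rabs (s1 t)) by (apply Rmult_le_compat_r; lra).
  assert (0 < q (T / 2) * Rabs (s1 t)) by nra.
  nra.
Qed.

Lemma final_gap_bound :
  eucl_norm (st1 T - s1 T) (st2 T - s2 T) <=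
    sqrt (1 + mu ^ 2) * Rabs (s1 T / s2 0) * eucl_norm (st1 0 - s1 0) (st2 0 - s2 0).
Proof.
  destruct (Hcone T ltac:(lra)) as [HdT HconeT]. destruct (Hcone 0 ltac:(lra)) as [Hd0 _].
  assert (HabsT : 0 < Rabs (s1 T)) by (apply Rabs_pos_lt, Hs_nz; lra).
  assert (Habs0 : 0 < Rabs (s2 0)) by (apply Rabs_pos_lt, Hs_nz; lra).
  assert (HqT : q T <= p 0).
  { rewrite <- (stable_ratio_le_initial (T / 2)) by lra. rewrite <- ratios_at_switch.
    apply unstable_ratio_monotone. lra. }
  assert (HdsT : st2 T - s2 T <= Rabs (s1 T) / Rabs (s2 0) * (st2 0 - s2 0)).
  { replace (st2 T - s2 T) with (q T * Rabs (s1 T)) by (unfold q; field; lra).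
    replace (Rabs (s1 T) / Rabs (s2 0) * (st2 0 - s2 0)) with (p 0 * Rabs (s1 T))
      by (unfold p; field; lra).
    apply Rmult_le_compat_r; lra. }
  assert (Hnorm0 := le_eucl_norm_r (st1 0 - s1 0) (st2 0 - s2 0)).
  assert (HsqrtT := eucl_norm_le_cone _ _ mu HconeT ltac:(lra)).
  assert (0 <= sqrt (1 + mu ^ 2)) by apply sqrt_pos.
  assert (0 <= Rabs (s1 T) / Rabs (s2 0)) by (apply Rdiv_le_0_compat; lra).
  rewrite Rabs_div by (apply Hs_nz; lra).
  assert (Rabs (s1 T) / Rabs (s2 0) * (st2 0 - s2 0)
          <= Rabs (s1 T) / Rabs (s2 0) * eucl_norm (st1 0 - s1 0) (st2 0 - s2 0))
    by (apply Rmult_le_compat_l; lra).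
  assert (sqrt (1 + mu ^ 2) * (st2 T - s2 T)
          <= sqrt (1 + mu ^ 2) * (Rabs (s1 T) / Rabs (s2 0) * eucl_norm (st1 0 - s1 0) (st2 0 - s2 0)))
    by (apply Rmult_le_compat_l; lra).
  lra.
Qed.

End GapRatios.

Theorem lemma5p3
  (lam alpha r0 mu T t0 t1 : R) (psi s1 s2 st1 st2 : R -> R)
  (Hlam : 1 < lam) (Halpha : 0 < alpha < 1) (Hr0 : 0 < r0 < 1)
  (Hpsi : admissible_psi r0 alpha psi)
  (Hmu : 0 < mu < 1)
  (HT : 0 < T) (Ht0 : t0 < 0) (Ht1 : T < t1)
  (* s is a solution on the open interval (t0,t1), staying in D_1 *)
  (Hs_sol : forall t, t0 < t < t1 -> solves_at psi lam s1 s2 t)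
  (Hs_D1 : forall t, t0 < t < t1 -> inD 1 (s1 t) (s2 t))
  (* [0,T] is the maximal time interval on which s(t) lies in D_{r0/2} *)
  (Hs_in : forall t, 0 <= t <= T -> inD (r0 / 2) (s1 t) (s2 t))
  (Hs_max0 : forall eps, 0 < eps -> exists t, t0 < t /\ - eps < t < 0 /\
                ~ inD (r0 / 2) (s1 t) (s2 t))
  (Hs_maxT : forall eps, 0 < eps -> exists t, t < t1 /\ T < t < T + eps /\
                ~ inD (r0 / 2) (s1 t) (s2 t))
  (Hs_first : forall t, 0 <= t <= T / 2 -> Rabs (s1 t) <= Rabs (s2 t))
  (Hs_second : forall t, T / 2 <= t <= T -> Rabs (s2 t) <= Rabs (s1 t))
  (Hs_nz : forall t, 0 <= t <= T -> s1 t <> 0 /\ s2 t <> 0)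
  (* stilde is another solution of the same system (on [0,T], in D_1) *)
  (Hst_sol : forall t, 0 <= t <= T -> solves_at psi lam st1 st2 t)
  (Hst_D1 : forall t, 0 <= t <= T -> inD 1 (st1 t) (st2 t))
  (* hypothesis (1) *)
  (H1 : forall t, 0 <= t <= T ->
          0 < st2 t - s2 t /\ Rabs (st1 t - s1 t) <= mu * (st2 t - s2 t))
  (* hypothesis (2) *)
  (H2 : Rabs ((st2 0 - s2 0) / s2 0) < (1 - mu) / 72) :
  let C1 := 2 * alpha * ln lam / Rpower r0 alpha in
  let beta := (1 - mu) / Rpower 2 (alpha + 2) in
  let T1 := T / 2 in
  let ds1 := fun t => st1 t - s1 t in
  let ds2 := fun t => st2 t - s2 t in
  (forall t, 0 <= t <= T1 ->
     ds2 t <= ds2 0 / s2 0 * s2 t *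
              Rpower (1 + Rpower 2 alpha * C1 * Rpower (Rabs (s2 0)) (2 * alpha) * t)
                     (- beta)) /\
  (forall t, T1 <= t <= T ->
     0 < 1 - Rpower 2 alpha * C1 * Rpower (Rabs (s1 T1)) (2 * alpha) * (t - T1) ->
     ds2 t <= ds2 T1 / s1 T1 * s1 t *
              Rpower (1 - Rpower 2 alpha * C1 * Rpower (Rabs (s1 T1)) (2 * alpha) * (t - T1))
                     (- beta)) /\
  eucl_norm (ds1 T) (ds2 T) <=
    sqrt (1 + mu ^ 2) * Rabs (s1 T / s2 0) * eucl_norm (ds1 0) (ds2 0).
Proof.
  intros C1 beta T1 ds1 ds2.
  assert (Hsol : forall t, 0 <= t <= T -> solves_at psi lam s1 s2 t)
    by (intros t Ht; apply Hs_sol; lra).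
  split; [|split].
  - apply (stable_phase_bound lam alpha r0 mu T psi s1 s2 st1 st2); assumption.
  - apply (unstable_phase_bound lam alpha r0 mu T psi s1 s2 st1 st2); assumption.
  - apply (final_gap_bound lam alpha r0 mu T psi s1 s2 st1 st2); assumption.
Qed.
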